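(* For every $\alpha\in(0,1)$ there exists an $\alpha$-H\''older continuous function $\tilde f=\tilde f_\alpha:[0,1]\to\mathbb{R}$ such that $$\dim_A^\theta \operatorname{Graph}(\tilde f)=\dim_{A,reg}^\theta \operatorname{Graph}(\tilde f)=\frac{2-\alpha-\theta}{1-\theta}$$ for all $\theta\in(0,\alpha)$.
   Context: A function $g:[0,1]\to\mathbb{R}$ is $\alpha$-H\''older continuous if there is $C>0$ with $|g(t)-g(s)|\le C|t-s|^\alpha$ for all $t,s$. $\operatorname{Graph}(g)=\{(t,g(t)):t\in[0,1]\}$. For a bounded set $F\subset\mathbb{R}^2$ and $r>0$, $N(F,r)$ is the least number of sets of diameter at most $r$ needed to cover $F$; $D(\mathbf z,R)$ is the closed disc of radius $R$ centered at $\mathbf z$. For $E\subset\mathbb{R}^2$ and $\theta\in(0,1)$, the Assouad spectrum is $$\dim_A^\theta(E)=\inf\{\gamma>0:\ \exists C>0 \text{ s.t. } N(D(\mathbf z,R)\cap E,r)\le C(R/r)^\gamma \text{ for all } 0<r=R^{1/\theta}<R<1,\ \mathbf z\in E\},$$ and the regularized Assouad spectrum $\dim_{A,reg}^\theta(E)$ is defined identically except that the condition $r=R^{1/\theta}$ is replaced by $0<r\le R^{1/\theta}$ (equivalently, $\dim_{A,reg}^\theta(E)=\sup_{0<\theta'<\theta}\dim_A^{\theta'}(E)$). *)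

From Stdlib Require Import Reals Lra.
From Coquelicot Require Import Coquelicot.
Open Scope R_scope.

Definition pt := (R * R)%type.

Definition dist2 (p q : pt) : R :=
  sqrt ((fst p - fst q)^2 + (snd p - snd q)^2).

(* real power with the convention 0^a = 0 for a > 0 (Stdlib's Rpower 0 a = 1) *)
Definition rpow (x a : R) : R := if Rle_dec x 0 then 0 else Rpower x a.

Definition Holder (alpha : R) (g : R -> R) : Prop :=
  exists C, 0 < C /\ forall t s, 0 <= t <= 1 -> 0 <= s <= 1 ->
    Rabs (g t - g s) <= C * rpow (Rabs (t - s)) alpha.

Definition Graph (g : R -> R) : pt -> Prop :=
  fun p => exists t, 0 <= t <= 1 /\ p = (t, g t).

Definition diam_le (U : pt -> Prop) (r : R) : Prop :=
  forall p q, U p -> U q -> dist2 p q <= r.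

Definition covered_by (F : pt -> Prop) (r : R) (n : nat) : Prop :=
  exists U : nat -> pt -> Prop,
    (forall i, (i < n)%nat -> diam_le (U i) r) /\
    (forall p, F p -> exists i, (i < n)%nat /\ U i p).

Definition Ncov (F : pt -> Prop) (r : R) : Rbar :=
  Glb_Rbar (fun x => exists n : nat, x = INR n /\ covered_by F r n).

Definition Disc (z : pt) (Rad : R) : pt -> Prop := fun p => dist2 p z <= Rad.

Definition inter (A B : pt -> Prop) : pt -> Prop := fun p => A p /\ B p.

Definition assouad_spec (theta : R) (E : pt -> Prop) : Rbar :=
  Glb_Rbar (fun gamma => 0 < gamma /\ exists C, 0 < C /\
    forall (Rad r : R) (z : pt), 0 < r -> r = Rpower Rad (1 / theta) -> r < Rad -> Rad < 1 ->
      E z ->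
      Rbar_le (Ncov (inter (Disc z Rad) E) r) (Finite (C * Rpower (Rad / r) gamma))).

Definition assouad_spec_reg (theta : R) (E : pt -> Prop) : Rbar :=
  Glb_Rbar (fun gamma => 0 < gamma /\ exists C, 0 < C /\
    forall (Rad r : R) (z : pt), 0 < r -> r <= Rpower Rad (1 / theta) -> r < Rad -> Rad < 1 ->
      E z ->
      Rbar_le (Ncov (inter (Disc z Rad) E) r) (Finite (C * Rpower (Rad / r) gamma))).

From Stdlib Require Import Reals Lra Lia List ZArith IndefiniteDescription.
From Coquelicot Require Import Coquelicot.
Open Scope R_scope.

(* On the block [1/(k+1), 1/k] the function is the sawtooth p^al * dist(t/p, Z) of period
   p = (k(k+1))^-k, which vanishes at both block ends; it is al-Hölder with constant 2.
   Any al-Hölder graph meets D(z,R) in a set coverable by about (R/r) * r^(al-1) sets of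
   diameter r, which is at most (R/r)^((2-al-th)/(1-th)) when r <= R^(1/th): this bounds both
   spectra from above.  Conversely, for R = p^th <= 1/(k(k+1)) and r = p, the teeth of the
   k-th block give about (R/p) * p^(al-1) = (R/r)^((2-al-th)/(1-th)) points of the graph in
   D(1/k, R) that are pairwise more than r apart; as p -> 0 along the blocks, no smaller
   exponent is admissible for dim_A^th, and dim_A^th <= dim_A,reg^th. *)

Lemma exp_le_compat x y : x <= y -> exp x <= exp y.
Proof. intros [Hxy | ->]; [left; apply exp_increasing |]; lra. Qed.

Lemma Rpower_pos x a : 0 < Rpower x a.
Proof. apply exp_pos. Qed.

Lemma Rle_Rpower_base_le1 p a b : 0 < p <= 1 -> a <= b -> Rpower p b <= Rpower p a.
Proof.
  intros Hp Hab. apply exp_le_compat.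
  assert (ln p <= 0) by (rewrite <- ln_1; apply ln_le; lra). nra.
Qed.

Lemma Rpower_div_base r a : 0 < r -> Rpower r a / r = Rpower r (a - 1).
Proof.
  intros Hr. unfold Rminus. rewrite Rpower_plus, Rpower_Ropp, Rpower_1 by exact Hr.
  reflexivity.
Qed.

Lemma nat_ceil x : 0 <= x -> exists n : nat, x < INR n <= x + 1.
Proof.
  intros Hx. destruct (nfloor_ex x Hx) as [n Hn]. exists (S n). rewrite S_INR. lra.
Qed.

Lemma INR_ge_1 k : (1 <= k)%nat -> 1 <= INR k.
Proof. apply (le_INR 1). Qed.

Lemma INR_lt_succ_le m n : (m < n)%nat -> INR m + 1 <= INR n.
Proof. intros H. rewrite <- S_INR. apply le_INR, H. Qed.

Lemma INR_neq_sep a b : a <> b -> INR a + 1 <= INR b \/ INR b + 1 <= INR a.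
Proof.
  intros Hab. destruct (Nat.lt_gt_cases a b) as [[Hlt | Hgt] _]; [exact Hab | left | right];
    apply INR_lt_succ_le; assumption.
Qed.

Lemma rpow_nonneg x a : 0 <= rpow x a.
Proof. unfold rpow. destruct Rle_dec; [lra | left; apply Rpower_pos]. Qed.

Lemma rpow_pos_eq x a : 0 < x -> rpow x a = Rpower x a.
Proof. intros Hx. unfold rpow. destruct Rle_dec; lra. Qed.

Lemma rpow_le_compat a b al : 0 < al -> a <= b -> rpow a al <= rpow b al.
Proof.
  intros Hal Hab. unfold rpow.
  destruct (Rle_dec a 0), (Rle_dec b 0); try lra.
  - left; apply Rpower_pos.
  - apply Rle_Rpower_l; lra.
Qed.

(** * Covering numbers and Hölder graphs *)

Lemma dist2_le_coords p q r : 0 <= r ->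
  Rabs (fst p - fst q) <= r / 2 -> Rabs (snd p - snd q) <= r / 2 -> dist2 p q <= r.
Proof.
  intros Hr H1 H2. unfold dist2. rewrite <- (sqrt_Rsqr r Hr).
  apply sqrt_le_1_alt. apply Rabs_le_between in H1, H2. unfold Rsqr. simpl. nra.
Qed.

Lemma dist2_ge_fst p q : Rabs (fst p - fst q) <= dist2 p q.
Proof.
  unfold dist2. rewrite <- sqrt_Rsqr_abs. apply sqrt_le_1_alt.
  pose proof (pow2_ge_0 (snd p - snd q)). unfold Rsqr. simpl in *. lra.
Qed.

Lemma dist2_ge_snd p q : Rabs (snd p - snd q) <= dist2 p q.
Proof.
  unfold dist2. rewrite <- sqrt_Rsqr_abs. apply sqrt_le_1_alt.
  pose proof (pow2_ge_0 (fst p - fst q)). unfold Rsqr. simpl in *. lra.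
Qed.

Lemma Ncov_le_covered F r n : covered_by F r n -> Rbar_le (Ncov F r) (INR n).
Proof. intros H. apply (proj1 (Glb_Rbar_correct _)). exists n. split; [reflexivity | exact H]. Qed.

Lemma covered_by_grid F r N M (B : nat -> nat -> pt -> Prop) :
  (forall i j, (i < N)%nat -> (j < M)%nat -> diam_le (B i j) r) ->
  (forall p, F p -> exists i j, (i < N)%nat /\ (j < M)%nat /\ B i j p) ->
  covered_by F r (N * M).
Proof.
  intros Hdiam Hcov. exists (fun n => B (n / M)%nat (n mod M)%nat). split.
  - intros n Hn. apply Hdiam; [apply Nat.Div0.div_lt_upper_bound; lia |].
    apply Nat.mod_upper_bound. lia.
  - intros p Hp. destruct (Hcov p Hp) as [i [j [Hi [Hj HB]]]].
    exists (i * M + j)%nat. split; [nia |].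
    rewrite Nat.div_add_l, Nat.div_small, Nat.add_0_r by lia.
    rewrite Nat.add_comm, Nat.Div0.mod_add, Nat.mod_small by lia. exact HB.
Qed.

Lemma injective_below_le (g : nat -> nat) m n :
  (forall q, (q < m)%nat -> (g q < n)%nat) ->
  (forall q q', (q < m)%nat -> (q' < m)%nat -> g q = g q' -> q = q') ->
  (m <= n)%nat.
Proof.
  intros Hlt Hinj.
  enough (H : (length (map g (seq 0 m)) <= length (seq 0 n))%nat)
    by (rewrite length_map, !length_seq in H; exact H).
  apply NoDup_incl_length.
  - apply NoDup_map_NoDup_ForallPairs; [| apply seq_NoDup].
    intros a b Ha Hb. apply in_seq in Ha, Hb. apply Hinj; lia.
  - intros y Hy. apply in_map_iff in Hy. destruct Hy as [q [<- Hq]].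
    apply in_seq in Hq. apply in_seq. specialize (Hlt q). lia.
Qed.

(* Each covering set has diameter <= r, so it contains at most one of the r-separated points. *)
Lemma Ncov_ge_separated F r (x : nat -> pt) m :
  (forall q, (q < m)%nat -> F (x q)) ->
  (forall q q', (q < m)%nat -> (q' < m)%nat -> q <> q' -> r < dist2 (x q) (x q')) ->
  Rbar_le (INR m) (Ncov F r).
Proof.
  intros HF Hsep. apply (proj2 (Glb_Rbar_correct _)).
  intros y [n [-> [U [HU HcovU]]]]. simpl. apply le_INR.
  assert (Hch : forall q, exists i, (q < m)%nat -> (i < n)%nat /\ U i (x q)).
  { intros q. destruct (Nat.lt_ge_cases q m) as [Hq | Hq].
    - destruct (HcovU (x q) (HF q Hq)) as [i Hi]. exists i. intros _. exact Hi.
    - exists O. lia. }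
  apply functional_choice in Hch. destruct Hch as [g Hg].
  apply (injective_below_le g); [intros q Hq; apply (Hg q Hq) |].
  intros q q' Hq Hq' E. destruct (Nat.eq_dec q q') as [| Hne]; [assumption | exfalso].
  destruct (Hg q Hq) as [Hi Hqi], (Hg q' Hq') as [_ Hqi']. rewrite <- E in Hqi'.
  specialize (HU _ Hi _ _ Hqi Hqi'). specialize (Hsep q q' Hq Hq' Hne). lra.
Qed.

Lemma Ncov_ge_grid F r J K (x : nat -> nat -> pt) :
  (forall j m, (j < J)%nat -> (m < K)%nat -> F (x j m)) ->
  (forall j m j' m', (j < J)%nat -> (m < K)%nat -> (j' < J)%nat -> (m' < K)%nat ->
     j <> j' \/ m <> m' -> r < dist2 (x j m) (x j' m')) ->
  Rbar_le (INR (J * K)) (Ncov F r).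
Proof.
  intros HF Hsep. destruct (Nat.eq_dec K 0) as [-> | HK].
  { rewrite Nat.mul_0_r. apply Ncov_ge_separated with (x := fun _ => (0, 0)); lia. }
  apply Ncov_ge_separated with (x := fun q => x (q / K)%nat (q mod K)%nat).
  - intros q Hq. apply HF; [apply Nat.Div0.div_lt_upper_bound; lia | apply Nat.mod_upper_bound, HK].
  - intros q q' Hq Hq' Hne. apply Hsep;
      try (apply Nat.Div0.div_lt_upper_bound; lia); try (apply Nat.mod_upper_bound, HK).
    destruct (Nat.eq_dec (q / K) (q' / K)) as [Ediv | Ediv]; [right | left; exact Ediv].
    intros Emod. apply Hne. rewrite (Nat.div_mod q K HK), (Nat.div_mod q' K HK), Ediv, Emod.
    reflexivity.
Qed.

Lemma cell_index x0 w t (N : nat) : 0 < w -> x0 <= t -> t - x0 < INR N * w ->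
  exists i : nat, (i < N)%nat /\ x0 + INR i * w <= t <= x0 + (INR i + 1) * w.
Proof.
  intros Hw Ht HtN.
  assert (Hq : 0 <= (t - x0) / w) by (apply Rdiv_le_0_compat; lra).
  destruct (nfloor_ex _ Hq) as [i [Hi1 Hi2]].
  apply Rmult_le_compat_r with (r := w) in Hi1; [| lra].
  apply Rmult_lt_compat_r with (r := w) in Hi2; [| lra].
  unfold Rdiv in Hi1, Hi2. rewrite Rmult_assoc, Rinv_l, Rmult_1_r in Hi1, Hi2 by lra.
  exists i. split; [| lra].
  apply INR_lt, Rmult_lt_reg_r with w; lra.
Qed.

Definition clamp01 (c : R) : R := Rmax 0 (Rmin 1 c).

Lemma clamp01_near c w t : 0 <= t <= 1 -> c <= t <= c + w ->
  0 <= clamp01 c <= 1 /\ Rabs (t - clamp01 c) <= w.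
Proof.
  intros Ht Hc. unfold clamp01, Rmax, Rmin.
  repeat destruct Rle_dec; split; try lra; apply Rabs_le; lra.
Qed.

Section HolderGraph.

Variables (f : R -> R) (C al : R).
Hypotheses (HC : 0 < C) (Hal : 0 < al < 1).
Hypothesis Hf : forall t s, 0 <= t <= 1 -> 0 <= s <= 1 ->
  Rabs (f t - f s) <= C * rpow (Rabs (t - s)) al.

(* Cut the disc into columns of width r/2; over each column the graph has height at most 2 C (r/2)^al. *)
Lemma holder_graph_disc_covered Rad r z : 0 < r -> r < Rad ->
  exists n : nat, covered_by (inter (Disc z Rad) (Graph f)) r n /\
    INR n <= (4 * Rad / r + 1) * (4 * C * Rpower r al / r + 1).
Proof.
  intros Hr HrR.
  set (w := r / 2). set (x0 := fst z - Rad). set (H := C * rpow w al).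
  assert (Hw : 0 < w) by (unfold w; lra).
  assert (H0 : 0 <= H) by (unfold H; pose proof (rpow_nonneg w al); nra).
  assert (HH : H <= C * Rpower r al).
  { unfold H. rewrite <- (rpow_pos_eq r al) by lra.
    apply Rmult_le_compat_l; [lra | apply rpow_le_compat; unfold w; lra]. }
  destruct (nat_ceil (4 * Rad / r)) as [N [HN1 HN2]]; [apply Rlt_le, Rdiv_lt_0_compat; lra |].
  destruct (nat_ceil (4 * H / r)) as [M [HM1 HM2]]; [apply Rdiv_le_0_compat; lra |].
  assert (HNw : 2 * Rad < INR N * w).
  { unfold w. apply Rmult_lt_compat_r with (r := r) in HN1; [| lra].
    unfold Rdiv in HN1. rewrite Rmult_assoc, Rinv_l in HN1; lra. }
  assert (HMw : 2 * H < INR M * w).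
  { unfold w. apply Rmult_lt_compat_r with (r := r) in HM1; [| lra].
    unfold Rdiv in HM1. rewrite Rmult_assoc, Rinv_l in HM1; lra. }
  set (b := fun i : nat => f (clamp01 (x0 + INR i * w)) - H).
  exists (N * M)%nat. split.
  - apply covered_by_grid with (B := fun i j p =>
      x0 + INR i * w <= fst p <= x0 + (INR i + 1) * w /\
      b i + INR j * w <= snd p <= b i + (INR j + 1) * w).
    + intros i j _ _ p q [Hp1 Hp2] [Hq1 Hq2].
      apply dist2_le_coords; [lra | |]; apply Rabs_le; unfold w in *; lra.
    + intros p [Hd [t [Ht ->]]]. simpl.
      pose proof (dist2_ge_fst (t, f t) z) as Hx. unfold Disc in Hd. simpl in Hx.
      apply Rabs_le_between' in Hx.
      destruct (cell_index x0 w t N) as [i [Hi Hti]]; [exact Hw | unfold x0; lra | unfold x0; lra |].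
      destruct (clamp01_near (x0 + INR i * w) w t Ht) as [Hc Hct]; [lra |].
      assert (Hft : Rabs (f t - f (clamp01 (x0 + INR i * w))) <= H).
      { eapply Rle_trans; [apply Hf; assumption |].
        apply Rmult_le_compat_l; [lra | apply rpow_le_compat; lra]. }
      apply Rabs_le_between' in Hft.
      destruct (cell_index (b i) w (f t) M) as [j [Hj Htj]]; [exact Hw | unfold b; lra | unfold b; lra |].
      exists i, j. split; [exact Hi | split; [exact Hj | split; assumption]].
  - rewrite mult_INR. apply Rmult_le_compat; try apply pos_INR; [lra |].
    enough (4 * H / r <= 4 * C * Rpower r al / r) by lra.
    apply Rmult_le_compat_r; [left; apply Rinv_0_lt_compat |]; lra.
Qed.

End HolderGraph.

Definition covering_exponent (scale : R -> R -> Prop) (E : pt -> Prop) (gamma : R) : Prop :=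
  0 < gamma /\ exists C, 0 < C /\
    forall (Rad r : R) (z : pt), 0 < r -> scale Rad r -> r < Rad -> Rad < 1 -> E z ->
      Rbar_le (Ncov (inter (Disc z Rad) E) r) (Finite (C * Rpower (Rad / r) gamma)).

Lemma assouad_spec_covering_exponent th E :
  assouad_spec th E = Glb_Rbar (covering_exponent (fun Rad r => r = Rpower Rad (1 / th)) E).
Proof. reflexivity. Qed.

Lemma assouad_spec_reg_covering_exponent th E :
  assouad_spec_reg th E = Glb_Rbar (covering_exponent (fun Rad r => r <= Rpower Rad (1 / th)) E).
Proof. reflexivity. Qed.

Lemma covering_exponent_sub (scale1 scale2 : R -> R -> Prop) E gamma :
  (forall Rad r, scale1 Rad r -> scale2 Rad r) ->
  covering_exponent scale2 E gamma -> covering_exponent scale1 E gamma.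
Proof.
  intros Hsub [Hg [C [HC HN]]]. split; [exact Hg |]. exists C. split; [exact HC |].
  intros Rad r z Hr Hs. apply HN; [exact Hr | apply Hsub, Hs].
Qed.

Lemma Glb_Rbar_least (E : R -> Prop) g : E g -> (forall x, E x -> g <= x) -> Glb_Rbar E = Finite g.
Proof.
  intros Hg Hlb. apply is_glb_Rbar_unique. split.
  - intros x Hx. apply Hlb, Hx.
  - intros b Hb. apply Hb, Hg.
Qed.

(* r <= Rad^(1/th) means Rad/r >= r^(th-1), and r^(al-1) = (r^(th-1))^((1-al)/(1-th)) *)
Lemma scale_exponent_le al th Rad r : 0 < al < 1 -> 0 < th < 1 -> 0 < r < Rad ->
  r <= Rpower Rad (1 / th) ->
  Rad / r * Rpower r (al - 1) <= Rpower (Rad / r) ((2 - al - th) / (1 - th)).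
Proof.
  intros Hal Hth Hr Hle. assert (HX : 0 < Rad / r) by (apply Rdiv_lt_0_compat; lra).
  assert (Hrth : Rpower r th <= Rad).
  { replace Rad with (Rpower (Rpower Rad (1 / th)) th).
    - apply Rle_Rpower_l; lra.
    - rewrite Rpower_mult. replace (1 / th * th) with 1 by (field; lra). apply Rpower_1; lra. }
  assert (Hth1 : Rpower r (th - 1) <= Rad / r).
  { rewrite <- Rpower_div_base by lra.
    apply Rmult_le_compat_r; [left; apply Rinv_0_lt_compat; lra | exact Hrth]. }
  set (e := (1 - al) / (1 - th)).
  assert (He : 0 <= e) by (apply Rdiv_le_0_compat; lra).
  replace ((2 - al - th) / (1 - th)) with (1 + e) by (unfold e; field; lra).
  replace (al - 1) with ((th - 1) * e) by (unfold e; field; lra).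
  rewrite Rpower_plus, Rpower_1, <- Rpower_mult by exact HX.
  apply Rmult_le_compat_l; [lra |]. apply Rle_Rpower_l; [exact He | split; [apply Rpower_pos | exact Hth1]].
Qed.

Lemma holder_graph_covering_exponent f al th : 0 < al < 1 -> 0 < th < 1 -> Holder al f ->
  covering_exponent (fun Rad r => r <= Rpower Rad (1 / th)) (Graph f) ((2 - al - th) / (1 - th)).
Proof.
  intros Hal Hth [C [HC Hf]]. split; [apply Rdiv_lt_0_compat; lra |].
  exists (5 * (4 * C + 1)). split; [lra |].
  intros Rad r z Hr Hle HrR HR1 _.
  destruct (holder_graph_disc_covered f C al HC Hal Hf Rad r z Hr HrR) as [n [Hcov Hn]].
  eapply Rbar_le_trans; [apply Ncov_le_covered, Hcov |]. simpl.
  pose proof (scale_exponent_le al th Rad r Hal Hth (conj Hr HrR) Hle) as Hexp.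
  assert (HX : 1 < Rad / r).
  { apply Rmult_lt_reg_r with r; [lra |].
    unfold Rdiv. rewrite Rmult_assoc, Rinv_l; lra. }
  assert (HY : 1 <= Rpower r (al - 1)).
  { rewrite <- (Rpower_O r) at 1 by lra. apply Rle_Rpower_base_le1; lra. }
  set (X := Rad / r) in *. set (Y := Rpower r (al - 1)) in *.
  replace (4 * Rad / r) with (4 * X) in Hn by (unfold X, Rdiv; ring).
  replace (4 * C * Rpower r al / r) with (4 * C * Y) in Hn
    by (unfold Y; rewrite <- Rpower_div_base by lra; unfold Rdiv; ring).
  assert ((4 * X + 1) * (4 * C * Y + 1) <= 5 * X * ((4 * C + 1) * Y))
    by (apply Rmult_le_compat; nra).
  nra.
Qed.

(** * The blocked sawtooth *)

Definition saw (x : R) : R :=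
  Rmin (x - IZR (Int_part x)) (IZR (Int_part x) + 1 - x).

Lemma saw_le_dist x (n : Z) : saw x <= Rabs (x - IZR n).
Proof.
  unfold saw. destruct (base_Int_part x) as [H1 H2].
  destruct (Z_le_gt_dec n (Int_part x)) as [H | H].
  - apply IZR_le in H. eapply Rle_trans; [apply Rmin_l |]. rewrite Rabs_right; lra.
  - assert (H' : (Int_part x + 1 <= n)%Z) by lia. apply IZR_le in H'.
    rewrite plus_IZR in H'.
    eapply Rle_trans; [apply Rmin_r |]. rewrite Rabs_left1; lra.
Qed.

Lemma saw_attained x : exists n : Z, saw x = Rabs (x - IZR n).
Proof.
  unfold saw. destruct (base_Int_part x) as [H1 H2].
  destruct (Rle_dec (x - IZR (Int_part x)) (IZR (Int_part x) + 1 - x)).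
  - exists (Int_part x). rewrite Rmin_left, Rabs_right; lra.
  - exists (Int_part x + 1)%Z. rewrite Rmin_right, plus_IZR, Rabs_left1; lra.
Qed.

Lemma saw_bounds x : 0 <= saw x <= 1 / 2.
Proof.
  split; [destruct (saw_attained x) as [n ->]; apply Rabs_pos |].
  unfold saw. destruct (base_Int_part x).
  destruct (Rle_dec (x - IZR (Int_part x)) (IZR (Int_part x) + 1 - x));
    [rewrite Rmin_left | rewrite Rmin_right]; lra.
Qed.

Lemma saw_lipschitz x y : Rabs (saw x - saw y) <= Rabs (x - y).
Proof.
  destruct (saw_attained x) as [n Hn], (saw_attained y) as [m Hm].
  pose proof (saw_le_dist x m). pose proof (saw_le_dist y n).
  pose proof (Rabs_triang (x - y) (y - IZR m)).
  pose proof (Rabs_triang (y - x) (x - IZR n)).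
  replace (x - y + (y - IZR m)) with (x - IZR m) in * by ring.
  replace (y - x + (x - IZR n)) with (y - IZR n) in * by ring.
  rewrite (Rabs_minus_sym y x) in *.
  apply Rabs_le. lra.
Qed.

Lemma saw_int_sub (n : Z) u : 0 <= u <= 1 / 2 -> saw (IZR n - u) = u.
Proof.
  intros Hu. apply Rle_antisym.
  - pose proof (saw_le_dist (IZR n - u) n). rewrite Rabs_left1 in * by lra. lra.
  - destruct (saw_attained (IZR n - u)) as [m ->].
    destruct (Z.lt_total m n) as [Hmn | [-> | Hmn]].
    + apply Zlt_le_succ, IZR_le in Hmn. rewrite succ_IZR in Hmn.
      rewrite Rabs_right; lra.
    + rewrite Rabs_left1; lra.
    + apply Zlt_le_succ, IZR_le in Hmn. rewrite succ_IZR in Hmn.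
      rewrite Rabs_left1; lra.
Qed.

Definition scaled_saw (al p t : R) : R := Rpower p al * saw (t / p).

Lemma scaled_saw_at_multiple al p (n : nat) : 0 < p -> scaled_saw al p (INR n * p) = 0.
Proof.
  intros Hp. unfold scaled_saw.
  replace (INR n * p / p) with (IZR (Z.of_nat n) - 0) by (rewrite <- INR_IZR_INZ; field; lra).
  rewrite saw_int_sub by lra. ring.
Qed.

Lemma scaled_saw_holder al p t s : 0 < p -> 0 < al < 1 ->
  Rabs (scaled_saw al p t - scaled_saw al p s) <= rpow (Rabs (t - s)) al.
Proof.
  intros Hp Hal. unfold scaled_saw.
  rewrite <- Rmult_minus_distr_l, Rabs_mult, (Rabs_right (Rpower p al))
    by (left; apply Rpower_pos).
  set (d := Rabs (t - s)).
  destruct (Req_dec d 0) as [Hd0 | Hd0].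
  { apply Rabs_eq_0, Rminus_diag_uniq in Hd0. subst t.
    rewrite Rminus_diag, Rabs_R0, Rmult_0_r. apply rpow_nonneg. }
  assert (Hd : 0 < d) by (pose proof (Rabs_pos (t - s)); unfold d in *; lra).
  rewrite rpow_pos_eq by exact Hd.
  destruct (Rle_dec d p) as [Hdp | Hdp].
  - pose proof (saw_lipschitz (t / p) (s / p)) as Hlip.
    replace (t / p - s / p) with ((t - s) / p) in Hlip by (field; lra).
    rewrite Rabs_div, (Rabs_right p) in Hlip by lra. fold d in Hlip.
    eapply Rle_trans; [apply Rmult_le_compat_l; [left; apply Rpower_pos | exact Hlip] |].
    replace (Rpower p al * (d / p)) with (d * (Rpower p al / p)) by (field; lra).
    replace (Rpower d al) with (d * (Rpower d al / d)) by (field; lra).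
    rewrite !Rpower_div_base by lra.
    apply Rmult_le_compat_l; [lra |]. apply exp_le_compat.
    assert (ln d <= ln p) by (apply ln_le; lra). nra.
  - assert (Hs : Rabs (saw (t / p) - saw (s / p)) <= 1).
    { pose proof (saw_bounds (t / p)); pose proof (saw_bounds (s / p)).
      apply Rabs_le; lra. }
    eapply Rle_trans; [apply Rmult_le_compat_l; [left; apply Rpower_pos | exact Hs] |].
    rewrite Rmult_1_r. apply Rle_Rpower_l; lra.
Qed.

(* The period used on the k-th block [1/(k+1), 1/k]: it divides both block ends, and its
   th-th power is still below the block length once k th >= 1. *)
Definition block_scale (k : nat) : R := / (INR k * (INR k + 1)) ^ k.

Section BlockScale.

Variable k : nat.
Hypothesis Hk : (1 <= k)%nat.

Let Hk1 : 1 <= INR k := INR_ge_1 k Hk.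

Lemma block_scale_pos : 0 < block_scale k.
Proof. apply Rinv_0_lt_compat, pow_lt. nra. Qed.

Lemma block_scale_le_gap : block_scale k <= / (INR k * (INR k + 1)).
Proof.
  unfold block_scale. apply Rinv_le_contravar; [nra |].
  rewrite <- (pow_1 (INR k * (INR k + 1))) at 1. apply Rle_pow; [nra | exact Hk].
Qed.

Lemma block_scale_pow_le_gap th : 0 < th -> 1 <= th * INR k ->
  Rpower (block_scale k) th <= / (INR k * (INR k + 1)).
Proof.
  intros Hth Hthk. set (B := INR k * (INR k + 1)).
  assert (HB : 0 < / B <= 1) by (split; [apply Rinv_0_lt_compat | rewrite <- Rinv_1;
    apply Rinv_le_contravar]; unfold B; nra).
  unfold block_scale. fold B.
  rewrite <- pow_inv, <- Rpower_pow, Rpower_mult by lra.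
  rewrite <- (Rpower_1 (/ B)) at 2 by lra.
  apply Rle_Rpower_base_le1; lra.
Qed.

Lemma block_top_multiple : exists N : nat, / INR k = INR N * block_scale k.
Proof.
  destruct k as [|k']; [lia |].
  exists (S k' ^ k' * (S k' + 1) ^ S k')%nat.
  rewrite mult_INR, !pow_INR, plus_INR. unfold block_scale.
  set (x := INR (S k')) in *. rewrite Rpow_mult_distr.
  change (x ^ S k') with (x * x ^ k'). simpl INR. field.
  split; [| split]; try apply pow_nonzero; lra.
Qed.

Lemma block_bottom_multiple : exists N : nat, / (INR k + 1) = INR N * block_scale k.
Proof.
  destruct k as [|k']; [lia |].
  exists (S k' ^ S k' * (S k' + 1) ^ k')%nat.
  rewrite mult_INR, !pow_INR, plus_INR. unfold block_scale.
  set (x := INR (S k')) in *. rewrite Rpow_mult_distr.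
  change ((x + 1) ^ S k') with ((x + 1) * (x + 1) ^ k'). simpl INR. field.
  split; [| split]; try apply pow_nonzero; lra.
Qed.

End BlockScale.

(* the k with 1/(k+1) < t <= 1/k *)
Definition block_index (t : R) : nat := (Z.to_nat (up (/ t)) - 1)%nat.

Lemma block_index_spec t : 0 < t <= 1 ->
  (1 <= block_index t)%nat /\ / (INR (block_index t) + 1) < t <= / INR (block_index t).
Proof.
  intros Ht. assert (Hi : 1 <= / t) by (rewrite <- Rinv_1; apply Rinv_le_contravar; lra).
  destruct (archimed (/ t)) as [A1 A2].
  assert (Hn : (2 <= up (/ t))%Z).
  { apply le_IZR. destruct (Z_lt_le_dec (up (/ t)) 2) as [H | H].
    - apply Z.lt_le_pred, IZR_le in H. simpl in H. lra.
    - apply IZR_le in H. exact H. }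
  assert (E : INR (block_index t) = IZR (up (/ t)) - 1).
  { unfold block_index. rewrite minus_INR, INR_IZR_INZ, Z2Nat.id by lia. reflexivity. }
  apply IZR_le in Hn.
  split; [apply (INR_le 1); rewrite E; simpl; lra |].
  rewrite E. set (u := / t) in *. replace t with (/ u) by (unfold u; field; lra). split.
  - apply Rinv_lt_contravar; [apply Rmult_lt_0_compat |]; lra.
  - apply Rinv_le_contravar; lra.
Qed.

Lemma block_index_unique k t : (1 <= k)%nat -> / (INR k + 1) < t <= / INR k ->
  block_index t = k.
Proof.
  intros Hk [H1 H2]. assert (Hk1 : 1 <= INR k) by (apply INR_ge_1, Hk).
  assert (Ht : 0 < t) by (apply Rlt_trans with (/ (INR k + 1)); [apply Rinv_0_lt_compat |]; lra).
  assert (Hup : Z.of_nat (k + 1) = up (/ t)).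
  { apply tech_up; rewrite <- INR_IZR_INZ, plus_INR; simpl.
    - rewrite <- (Rinv_inv (INR k + 1)).
      apply Rinv_lt_contravar; [apply Rmult_lt_0_compat; [apply Rinv_0_lt_compat |] |]; lra.
    - rewrite <- (Rinv_inv (INR k)) at 1. apply Rplus_le_compat_r, Rinv_le_contravar; lra. }
  unfold block_index. rewrite <- Hup, Nat2Z.id. lia.
Qed.

Lemma block_index_antitone t s : 0 < t <= 1 -> 0 < s <= 1 -> t < s ->
  (block_index s <= block_index t)%nat.
Proof.
  intros Ht Hs Hts.
  destruct (block_index_spec t Ht) as [H1 [H2 H3]], (block_index_spec s Hs) as [H4 [H5 H6]].
  destruct (Nat.le_gt_cases (block_index s) (block_index t)) as [H | H]; [exact H | exfalso].
  apply INR_ge_1 in H4.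
  apply INR_lt_succ_le in H.
  enough (/ INR (block_index s) <= / (INR (block_index t) + 1)) by lra.
  apply Rinv_le_contravar; [pose proof (pos_INR (block_index t)) |]; lra.
Qed.

Definition blocked_sawtooth (al t : R) : R :=
  if Rle_dec t 0 then 0 else scaled_saw al (block_scale (block_index t)) t.

Lemma blocked_sawtooth_pos al t : 0 < t ->
  blocked_sawtooth al t = scaled_saw al (block_scale (block_index t)) t.
Proof. intros Ht. unfold blocked_sawtooth. destruct Rle_dec; lra. Qed.

Lemma blocked_sawtooth_in_block al k t : (1 <= k)%nat -> / (INR k + 1) < t <= / INR k ->
  blocked_sawtooth al t = scaled_saw al (block_scale k) t.
Proof.
  intros Hk Ht. rewrite blocked_sawtooth_pos, (block_index_unique k t Hk Ht); [reflexivity |].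
  assert (0 < / (INR k + 1)) by (apply Rinv_0_lt_compat; apply INR_ge_1 in Hk; lra).
  lra.
Qed.

Lemma blocked_sawtooth_graph_top al k : (1 <= k)%nat -> Graph (blocked_sawtooth al) (/ INR k, 0).
Proof.
  intros Hk. assert (Hk1 := INR_ge_1 k Hk).
  destruct (block_top_multiple k Hk) as [N HN].
  exists (/ INR k). split.
  - split; [left; apply Rinv_0_lt_compat; lra | rewrite <- Rinv_1; apply Rinv_le_contravar; lra].
  - rewrite (blocked_sawtooth_in_block al k); [| exact Hk | split; [apply Rinv_lt_contravar; nra | lra]].
    rewrite HN, scaled_saw_at_multiple; [reflexivity | apply block_scale_pos, Hk].
Qed.

Section BlockedSawtoothHolder.

Variable al : R.
Hypothesis Hal : 0 < al < 1.

Lemma blocked_sawtooth_le_top t : 0 < t <= 1 ->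
  Rabs (blocked_sawtooth al t) <= rpow (/ INR (block_index t) - t) al.
Proof.
  intros Ht. destruct (block_index_spec t Ht) as [Hk Hkt].
  destruct (block_top_multiple _ Hk) as [N HN].
  assert (Hz : scaled_saw al (block_scale (block_index t)) (/ INR (block_index t)) = 0)
    by (rewrite HN; apply scaled_saw_at_multiple, block_scale_pos, Hk).
  rewrite blocked_sawtooth_pos, <- (Rminus_0_r (scaled_saw _ _ t)), <- Hz by lra.
  eapply Rle_trans.
  - apply scaled_saw_holder; [apply block_scale_pos, Hk | exact Hal].
  - apply rpow_le_compat; [lra |]. rewrite Rabs_left1; lra.
Qed.

Lemma blocked_sawtooth_le_bottom t : 0 < t <= 1 ->
  Rabs (blocked_sawtooth al t) <= rpow (t - / (INR (block_index t) + 1)) al.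
Proof.
  intros Ht. destruct (block_index_spec t Ht) as [Hk Hkt].
  destruct (block_bottom_multiple _ Hk) as [N HN].
  assert (Hz : scaled_saw al (block_scale (block_index t)) (/ (INR (block_index t) + 1)) = 0)
    by (rewrite HN; apply scaled_saw_at_multiple, block_scale_pos, Hk).
  rewrite blocked_sawtooth_pos, <- (Rminus_0_r (scaled_saw _ _ t)), <- Hz by lra.
  eapply Rle_trans.
  - apply scaled_saw_holder; [apply block_scale_pos, Hk | exact Hal].
  - apply rpow_le_compat; [lra |]. rewrite Rabs_right; lra.
Qed.

(* Across blocks, both values are controlled by the distance to the block ends lying between t and s. *)
Lemma blocked_sawtooth_holder_lt t s : 0 <= t <= 1 -> 0 <= s <= 1 -> t < s ->
  Rabs (blocked_sawtooth al t - blocked_sawtooth al s) <= 2 * rpow (s - t) al.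
Proof.
  intros Ht Hs Hts. assert (Hs0 : 0 < s <= 1) by lra.
  pose proof (rpow_nonneg (s - t) al).
  destruct (block_index_spec s Hs0) as [Hks [Hks1 Hks2]].
  destruct (Req_dec t 0) as [-> | Ht0].
  { unfold blocked_sawtooth at 1. destruct Rle_dec; [| lra].
    rewrite Rminus_0_l, Rabs_Ropp. eapply Rle_trans; [apply blocked_sawtooth_le_bottom; exact Hs0 |].
    assert (0 < / (INR (block_index s) + 1)) by (apply Rinv_0_lt_compat; apply INR_ge_1 in Hks; lra).
    pose proof (rpow_le_compat (s - / (INR (block_index s) + 1)) (s - 0) al). lra. }
  assert (Ht' : 0 < t <= 1) by lra.
  destruct (Nat.eq_dec (block_index t) (block_index s)) as [E | E].
  - rewrite !blocked_sawtooth_pos, E by lra.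
    eapply Rle_trans; [apply scaled_saw_holder; [apply block_scale_pos, Hks | exact Hal] |].
    rewrite Rabs_left1 by lra. replace (- (t - s)) with (s - t) by ring. lra.
  - pose proof (block_index_antitone t s Ht' Hs0 Hts) as Hle.
    destruct (block_index_spec t Ht') as [Hkt [Hkt1 Hkt2]].
    assert (INR (block_index s) + 1 <= INR (block_index t)) by (apply INR_lt_succ_le; lia).
    assert (/ INR (block_index t) <= / (INR (block_index s) + 1)).
    { apply Rinv_le_contravar; [apply INR_ge_1 in Hks |]; lra. }
    eapply Rle_trans; [apply Rabs_triang |]. rewrite Rabs_Ropp.
    pose proof (blocked_sawtooth_le_top t Ht'). pose proof (blocked_sawtooth_le_bottom s Hs0).
    pose proof (rpow_le_compat (/ INR (block_index t) - t) (s - t) al).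
    pose proof (rpow_le_compat (s - / (INR (block_index s) + 1)) (s - t) al).
    lra.
Qed.

Lemma blocked_sawtooth_holder : Holder al (blocked_sawtooth al).
Proof.
  exists 2. split; [lra |]. intros t s Ht Hs.
  destruct (Rtotal_order t s) as [H | [-> | H]].
  - rewrite (Rabs_left1 (t - s)) by lra. replace (- (t - s)) with (s - t) by ring.
    apply blocked_sawtooth_holder_lt; assumption.
  - rewrite !Rminus_diag, Rabs_R0. pose proof (rpow_nonneg 0 al). lra.
  - rewrite Rabs_minus_sym, (Rabs_right (t - s)) by lra.
    apply blocked_sawtooth_holder_lt; assumption.
Qed.

End BlockedSawtoothHolder.

(** * Lower bound *)

Lemma Rpower_ge_near_0 e B : e < 0 -> 0 < B ->
  exists d, 0 < d /\ forall p, 0 < p -> p <= d -> B <= Rpower p e.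
Proof.
  intros He HB. exists (exp (ln B / e)). split; [apply exp_pos |].
  intros p Hp Hd. apply ln_le in Hd; [| exact Hp]. rewrite ln_exp in Hd.
  rewrite <- (exp_ln B) by exact HB. apply exp_le_compat.
  apply Rmult_le_compat_neg_l with (r := e) in Hd; [| lra].
  replace (e * (ln B / e)) with (ln B) in Hd by (field; lra). lra.
Qed.

Lemma block_scale_pow_eventually_ge e B : e < 0 -> 0 < B ->
  exists k0, forall k, (k0 <= k)%nat -> (1 <= k)%nat -> B <= Rpower (block_scale k) e.
Proof.
  intros He HB. destruct (Rpower_ge_near_0 e B He HB) as [d [Hd Hpow]].
  destruct (nat_ceil (/ d)) as [k0 [Hk0 _]]; [left; apply Rinv_0_lt_compat, Hd |].
  exists k0. intros k Hk Hk1. pose proof (INR_ge_1 k Hk1). apply le_INR in Hk.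
  apply Hpow; [apply block_scale_pos, Hk1 |].
  eapply Rle_trans; [apply block_scale_le_gap, Hk1 |].
  rewrite <- (Rinv_inv d). apply Rinv_le_contravar; [apply Rinv_0_lt_compat, Hd |]. nra.
Qed.

Lemma blocked_sawtooth_below_top al k (n : nat) u : (1 <= k)%nat -> 0 <= u <= 1 / 2 ->
  / (INR k + 1) < / INR k - (INR n + u) * block_scale k ->
  blocked_sawtooth al (/ INR k - (INR n + u) * block_scale k) = Rpower (block_scale k) al * u.
Proof.
  intros Hk Hu Hlow. pose proof (block_scale_pos k Hk) as Hp. pose proof (pos_INR n).
  rewrite (blocked_sawtooth_in_block al k) by (first [exact Hk | split; [exact Hlow | nra]]).
  destruct (block_top_multiple k Hk) as [N HN]. unfold scaled_saw. f_equal.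
  replace ((/ INR k - (INR n + u) * block_scale k) / block_scale k)
    with (IZR (Z.of_nat N - Z.of_nat n) - u)
    by (rewrite minus_IZR, <- !INR_IZR_INZ, HN; field; lra).
  apply saw_int_sub, Hu.
Qed.

(* Distinct columns are at least 2p - p/2 apart horizontally, distinct rows 2p apart vertically. *)
Lemma staggered_grid_separated t0 p (j m j' m' : nat) u u' : 0 < p ->
  0 < u <= 1 / 2 -> 0 < u' <= 1 / 2 -> j <> j' \/ m <> m' ->
  p < dist2 (t0 - (INR (2 * j) + u) * p, 2 * (INR m + 1) * p)
            (t0 - (INR (2 * j') + u') * p, 2 * (INR m' + 1) * p).
Proof.
  intros Hp Hu Hu' [Hjj | Hmm].
  - eapply Rlt_le_trans; [| apply dist2_ge_fst]. cbn [fst snd].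
    replace (t0 - (INR (2 * j) + u) * p - (t0 - (INR (2 * j') + u') * p))
      with ((2 * (INR j' - INR j) + (u' - u)) * p) by (rewrite !mult_INR; simpl INR; ring).
    rewrite Rabs_mult, (Rabs_right p) by lra.
    rewrite <- (Rmult_1_l p) at 1. apply Rmult_lt_compat_r; [exact Hp |].
    destruct (INR_neq_sep _ _ Hjj); [rewrite Rabs_right | rewrite Rabs_left1]; lra.
  - eapply Rlt_le_trans; [| apply dist2_ge_snd]. cbn [fst snd].
    replace (2 * (INR m + 1) * p - 2 * (INR m' + 1) * p) with (2 * (INR m - INR m') * p) by ring.
    rewrite Rabs_mult, (Rabs_right p) by lra.
    rewrite <- (Rmult_1_l p) at 1. apply Rmult_lt_compat_r; [exact Hp |].
    destruct (INR_neq_sep _ _ Hmm); [rewrite Rabs_left1 | rewrite Rabs_right]; lra.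
Qed.

Section BlockGrid.

Variables (al : R) (k : nat) (Rad : R).
Hypotheses (Hal : 0 < al < 1) (Hk : (1 <= k)%nat).

Let p := block_scale k.
Let Y := Rpower p (al - 1).

Hypotheses (HRp : 8 * p <= Rad) (HRal : 2 * Rpower p al <= Rad)
  (HRk : Rad <= / (INR k * (INR k + 1))) (HY : 8 <= Y).

Let Hp : 0 < p := block_scale_pos k Hk.

Let HY_inv : Y * Rpower p (1 - al) = 1.
Proof. unfold Y. rewrite <- Rpower_plus. replace (al - 1 + (1 - al)) with 0 by ring. apply Rpower_O, Hp. Qed.

Let HY_mul : Y * p = Rpower p al.
Proof. unfold Y. rewrite <- (Rpower_1 p) at 2 by exact Hp. rewrite <- Rpower_plus. f_equal. ring. Qed.

(* The grid points sit on the rising edges of the teeth ending at 1/k - 2jp, at heights 2p, 4p, ...;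
   there are about (Rad/p) x p^(al-1) of them within distance Rad of (1/k, 0). *)
Lemma Ncov_block_ge :
  Rbar_le (Finite (Rad / p / 8 * (Y / 8)))
    (Ncov (inter (Disc (/ INR k, 0) Rad) (Graph (blocked_sawtooth al))) p).
Proof.
  assert (Hk1 := INR_ge_1 k Hk).
  assert (Hgap : / INR k - / (INR k + 1) = / (INR k * (INR k + 1))) by (field; lra).
  assert (HJ : 2 <= Rad / (4 * p)).
  { apply Rmult_le_reg_r with (4 * p); [lra |]. unfold Rdiv. rewrite Rmult_assoc, Rinv_l; lra. }
  destruct (nfloor_ex (Rad / (4 * p))) as [J HJ1]; [lra |].
  destruct (nfloor_ex (Y / 4)) as [K HK1]; [lra |].
  set (u := fun m : nat => 2 * (INR m + 1) * Rpower p (1 - al)).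
  set (t := fun j m : nat => / INR k - (INR (2 * j) + u m) * p).
  assert (Hu : forall m, (m < K)%nat -> 0 < u m <= 1 / 2).
  { intros m Hm. apply INR_lt_succ_le in Hm. pose proof (pos_INR m).
    pose proof (Rpower_pos p (1 - al)). unfold u. split; nra. }
  assert (Ht : forall j m, (j < J)%nat -> (m < K)%nat -> 0 <= / INR k - t j m <= Rad / 2).
  { intros j m Hj Hm. specialize (Hu m Hm). apply INR_lt_succ_le in Hj. pose proof (pos_INR j).
    assert (INR J * (4 * p) <= Rad) by (apply Rmult_le_reg_r with (/ (4 * p));
      [apply Rinv_0_lt_compat; lra | rewrite Rmult_assoc, Rinv_r, Rmult_1_r; lra]).
    unfold t. rewrite mult_INR. simpl INR. split; nra. }
  eapply Rbar_le_trans;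
    [| apply Ncov_ge_grid with (J := J) (K := K) (x := fun j m => (t j m, 2 * (INR m + 1) * p))].
  - change (Rad / p / 8 * (Y / 8) <= INR (J * K)).
    replace (Rad / p / 8) with (Rad / (4 * p) / 2) by (field; lra).
    rewrite mult_INR. apply Rmult_le_compat; lra.
  - intros j m Hj Hm. specialize (Ht j m Hj Hm). split.
    + apply dist2_le_coords; simpl; [lra | rewrite Rabs_left1; lra |].
      rewrite Rminus_0_r, Rabs_right by (pose proof (pos_INR m); nra).
      apply INR_lt_succ_le in Hm. nra.
    + exists (t j m). split.
      * split; [apply Rle_trans with (/ (INR k + 1)); [left; apply Rinv_0_lt_compat |] |
          apply Rle_trans with (/ INR k); [| rewrite <- Rinv_1; apply Rinv_le_contravar] ]; lra.
      * specialize (Hu m Hm). unfold t.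
        rewrite blocked_sawtooth_below_top; fold p; [| exact Hk | lra | unfold t in Ht; lra].
        f_equal. unfold u. rewrite <- HY_mul.
        transitivity (2 * (INR m + 1) * p * (Y * Rpower p (1 - al))); [rewrite HY_inv |]; ring.
  - intros j m j' m' _ Hm _ Hm' Hne. apply staggered_grid_separated; auto.
Qed.

End BlockGrid.

Section LowerBound.

Variables al th : R.
Hypotheses (Hal : 0 < al < 1) (Hth : 0 < th < al).

(* At the scales R = p^th, r = p with p = block_scale k, the block grid has about
   (R/r) * p^(al-1) = p^(th+al-2) = (R/r)^((2-al-th)/(1-th)) points. *)
Lemma Ncov_blocked_sawtooth_ge k : (1 <= k)%nat -> 1 <= th * INR k ->
  8 <= Rpower (block_scale k) (th - 1) -> 8 <= Rpower (block_scale k) (al - 1) ->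
  2 <= Rpower (block_scale k) (th - al) ->
  Rbar_le (Finite (Rpower (block_scale k) (th + al - 2) / 64))
    (Ncov (inter (Disc (/ INR k, 0) (Rpower (block_scale k) th)) (Graph (blocked_sawtooth al)))
       (block_scale k)).
Proof.
  intros Hk Hthk Hpth Hpal Hpthal.
  set (p := block_scale k) in *. assert (Hp : 0 < p) by (apply block_scale_pos, Hk).
  set (Rad := Rpower p th).
  assert (HRp : Rad / p = Rpower p (th - 1)) by (apply Rpower_div_base, Hp).
  assert (HRp8 : 8 * p <= Rad).
  { apply Rmult_le_reg_r with (/ p); [apply Rinv_0_lt_compat, Hp |].
    rewrite Rmult_assoc, Rinv_r, Rmult_1_r by lra. fold (Rad / p). lra. }
  assert (HRal : 2 * Rpower p al <= Rad).
  { unfold Rad. replace th with (al + (th - al)) at 1 by ring. rewrite Rpower_plus.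
    pose proof (Rpower_pos p al). nra. }
  assert (HRk : Rad <= / (INR k * (INR k + 1)))
    by (apply block_scale_pow_le_gap; [exact Hk | lra | exact Hthk]).
  replace (Rpower p (th + al - 2) / 64) with (Rad / p / 8 * (Rpower p (al - 1) / 8)).
  - exact (Ncov_block_ge al k Rad Hal Hk HRp8 HRal HRk Hpal).
  - rewrite HRp. replace (th + al - 2) with ((th - 1) + (al - 1)) by ring.
    rewrite Rpower_plus. field.
Qed.

Lemma blocked_sawtooth_covering_exponent_ge gamma :
  covering_exponent (fun Rad r => r = Rpower Rad (1 / th)) (Graph (blocked_sawtooth al)) gamma ->
  (2 - al - th) / (1 - th) <= gamma.
Proof.
  intros [_ [C [HC Hcov]]]. set (g := (2 - al - th) / (1 - th)).
  destruct (Rle_lt_dec g gamma) as [Hg | Hg]; [exact Hg | exfalso].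
  destruct (block_scale_pow_eventually_ge (th - 1) 8) as [k1 Hk1]; [lra | lra |].
  destruct (block_scale_pow_eventually_ge (al - 1) 8) as [k2 Hk2]; [lra | lra |].
  destruct (block_scale_pow_eventually_ge (th - al) 2) as [k3 Hk3]; [lra | lra |].
  destruct (block_scale_pow_eventually_ge ((th - 1) * (g - gamma)) (64 * C + 1)) as [k4 Hk4];
    [nra | lra |].
  destruct (nat_ceil (/ th)) as [k5 [Hk5 _]]; [left; apply Rinv_0_lt_compat; lra |].
  set (k := S (k1 + k2 + k3 + k4 + k5)).
  assert (Hk : (1 <= k)%nat) by (unfold k; lia).
  assert (HkR := INR_ge_1 k Hk).
  specialize (Hk1 k ltac:(unfold k; lia) Hk). specialize (Hk2 k ltac:(unfold k; lia) Hk).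
  specialize (Hk3 k ltac:(unfold k; lia) Hk). specialize (Hk4 k ltac:(unfold k; lia) Hk).
  assert (Hthk : 1 <= th * INR k).
  { assert (INR k5 <= INR k) by (apply le_INR; unfold k; lia).
    apply Rmult_le_reg_l with (/ th); [apply Rinv_0_lt_compat; lra |].
    rewrite <- Rmult_assoc, Rinv_l, Rmult_1_l, Rmult_1_r; lra. }
  pose proof (Ncov_blocked_sawtooth_ge k Hk Hthk Hk1 Hk2 Hk3) as Hcount.
  set (p := block_scale k) in *. assert (Hp : 0 < p) by (apply block_scale_pos, Hk).
  set (Rad := Rpower p th) in *.
  assert (HpR : p < Rad).
  { rewrite <- Rpower_div_base in Hk1 by exact Hp. fold Rad in Hk1.
    apply Rmult_le_compat_r with (r := p) in Hk1; [| lra].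
    unfold Rdiv in Hk1. rewrite Rmult_assoc, Rinv_l in Hk1; lra. }
  assert (HR1 : Rad < 1).
  { apply Rle_lt_trans with (/ (INR k * (INR k + 1)));
      [apply block_scale_pow_le_gap; [exact Hk | lra | exact Hthk] |].
    rewrite <- Rinv_1. apply Rinv_lt_contravar; nra. }
  assert (Hr : p = Rpower Rad (1 / th)).
  { unfold Rad. rewrite Rpower_mult. replace (th * (1 / th)) with 1 by (field; lra).
    symmetry. apply Rpower_1, Hp. }
  pose proof (Rbar_le_trans _ _ _ Hcount
    (Hcov Rad p _ Hp Hr HpR HR1 (blocked_sawtooth_graph_top al k Hk))) as Hcmp.
  simpl in Hcmp.
  assert (HRp : Rad / p = Rpower p (th - 1)) by (apply Rpower_div_base, Hp).
  rewrite HRp, Rpower_mult in Hcmp.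
  assert (Hsplit : Rpower p (th + al - 2)
                   = Rpower p ((th - 1) * (g - gamma)) * Rpower p ((th - 1) * gamma)).
  { rewrite <- Rpower_plus. f_equal. unfold g. field. lra. }
  pose proof (Rpower_pos p ((th - 1) * gamma)). nra.
Qed.

End LowerBound.

Theorem theorem1p2 :
  forall alpha : R, 0 < alpha < 1 ->
  exists f : R -> R, Holder alpha f /\
    forall theta : R, 0 < theta < alpha ->
      assouad_spec theta (Graph f) = Finite ((2 - alpha - theta) / (1 - theta)) /\
      assouad_spec_reg theta (Graph f) = Finite ((2 - alpha - theta) / (1 - theta)).
Proof.
  intros al Hal. exists (blocked_sawtooth al).
  split; [apply blocked_sawtooth_holder, Hal |]. intros th Hth.
  assert (Hup := holder_graph_covering_exponent _ al th Hal ltac:(lra) (blocked_sawtooth_holder al Hal)).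
  assert (Hlow := blocked_sawtooth_covering_exponent_ge al th Hal Hth).
  assert (Hreg : forall E gamma,
    covering_exponent (fun Rad r => r <= Rpower Rad (1 / th)) E gamma ->
    covering_exponent (fun Rad r => r = Rpower Rad (1 / th)) E gamma)
    by (intros E gamma; apply covering_exponent_sub; intros Rad r ->; apply Rle_refl).
  rewrite assouad_spec_covering_exponent, assouad_spec_reg_covering_exponent.
  split; apply Glb_Rbar_least.
  - exact (Hreg _ _ Hup).
  - exact Hlow.
  - exact Hup.
  - intros gamma Hg. exact (Hlow gamma (Hreg _ _ Hg)).
Qed.
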